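(* Let $\lambda_{\max}>1$ and let $F:[0,\lambda_{\max}]\to\mathbb{R}_+$ be continuously differentiable with $F(0)=0$, such that $F(x)<F^\star$ for all $x\in[0,1)$ and $F'(1)>0$. Suppose $x_1^\star\in(1,\lambda_{\max}]$, $x_2^\star\in[0,1)$, $p^\star\in(0,1)$ are such that the measure $\alpha(\{x_1^\star\})=p^\star$, $\alpha(\{x_2^\star\})=1-p^\star$ is an optimal solution of the problem defining $F^\star$. Let $\varepsilon>0$. Then for every stable control policy $\lambda$ with $R(\lambda)\le\varepsilon$, $$\mathbb{E}_\pi[\lambda(\bar q)]=1-\pi_0\ge 1-\frac{x_1^\star-x_2^\star}{F(x_1^\star)-F(x_2^\star)}\,\varepsilon.$$
   Context: A control policy is a function $\lambda:\mathbb{Z}_+\to[0,\lambda_{\max}]$; it defines a continuous-time birth–death chain on $\mathbb{Z}_+$ with rate $\lambda(q)$ from $q$ to $q+1$ and rate $1$ from $q$ to $q-1$ ($q\ge1$). Let $\mathcal S$ be the set of states reachable from $0$. The policy is stable if $\sum_{i\in\mathcal S}\prod_{q=0}^{i}\lambda(q)<\infty$ (positive recurrence on $\mathcal S$); then $\pi$ is its stationary distribution (with $\pi_0$ the mass at state $0$) and $\bar q\sim\pi$. $F^\star=\sup\{\mathbb{E}_\alpha[F(X)]:\alpha$ a probability measure on $[0,\lambda_{\max}]$, $X\sim\alpha$, $\mathbb{E}_\alpha[X]\le1\}$; regret $R(\lambda)=F^\star-\mathbb{E}_\pi[F(\lambda(\bar q))]$. *)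

From HB Require Import structures.
From mathcomp Require Import all_boot all_order all_algebra.
From mathcomp Require Import all_classical all_reals all_analysis.
From Stdlib Require Import Relations.

Set Implicit Arguments.
Unset Strict Implicit.
Unset Printing Implicit Defensive.

Import Order.TTheory GRing.Theory Num.Theory.
Import numFieldNormedType.Exports.
Local Open Scope classical_set_scope.
Local Open Scope ring_scope.

Section Queue.
Variable R : realType.

Definition I0 (lmax : R) : set R := `[0, lmax]%classic.

(* alpha is a probability measure on [0, lmax] (encoded as a Borel probability
   measure on R giving full mass to [0, lmax]) with E_alpha[X] <= 1. *)
Definition feasible (lmax : R) (alpha : probability R R) : Prop :=
  alpha (I0 lmax) = 1%E /\
  (\int[alpha]_(x in I0 lmax) x%:E <= 1%:E)%E.

Definition Fstar (lmax : R) (F : R -> R) : R :=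
  sup [set r : R | exists alpha : probability R R,
         feasible lmax alpha /\
         (\int[alpha]_(x in I0 lmax) (F x)%:E)%E = r%:E].

Definition optimal (lmax : R) (F : R -> R) (alpha : probability R R) : Prop :=
  feasible lmax alpha /\
  (\int[alpha]_(x in I0 lmax) (F x)%:E)%E = (Fstar lmax F)%:E.

Definition policy (lmax : R) (lam : nat -> R) : Prop :=
  forall q, 0 <= lam q <= lmax.

Definition rate (lam : nat -> R) (i j : nat) : R :=
  if j == i.+1 then lam i else if i == j.+1 then 1 else 0.

Definition step (lam : nat -> R) (i j : nat) : Prop := 0 < rate lam i j.

Definition reachable (lam : nat -> R) (i : nat) : Prop :=
  clos_refl_trans nat (step lam) 0%N i.

Definition stable (lam : nat -> R) : Prop :=
  (\sum_(i <oo | `[< reachable lam i >]) (\prod_(q < i.+1) lam q)%:E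
   < +oo)%E.

(* pi is the stationary distribution of the chain on S:
   a probability distribution on S satisfying the global balance equations
   pi Q = 0 (Q the generator), written out for each state j of S. *)
Definition stationary (lam : nat -> R) (pi : nat -> R) : Prop :=
  (forall i, 0 <= pi i) /\
  (forall i, ~ reachable lam i -> pi i = 0) /\
  (series pi @ \oo --> (1 : R)) /\
  (forall j, reachable lam j ->
     pi j * (lam j + (if (0 < j)%N then 1 else 0)) =
     (if (0 < j)%N then pi j.-1 * rate lam j.-1 j else 0)
       + pi j.+1 * rate lam j.+1 j).

Definition Epi (lam : nat -> R) (pi : nat -> R) (g : R -> R) : R :=
  limn (series (fun i => pi i * g (lam i))).

Definition regret (lmax : R) (F : R -> R) (lam pi : nat -> R) : R :=
  Fstar lmax F - Epi lam pi F.

End Queue.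

(* An optimal law supported on x2 < 1 < x1 must have mean exactly 1, since
   otherwise shifting mass from x2 to x1 stays feasible and increases the
   objective (F x2 < F^star forces F x2 < F x1).  The chord of F through x2 and
   x1, of slope mu > 0, then passes through (1, F^star), and it lies above F
   on [0, lmax]: mixing any point x with x1 (if x <= 1) or with x2 (if x > 1)
   into a law of mean 1 gives a feasible law, whose value is at most F^star.
   On the chain side, flow balance across each cut gives
   pi_q lambda(q) = pi_(q+1), hence E_pi[lambda] = 1 - pi_0.  Therefore
   E_pi[F(lambda)] <= F^star + mu (E_pi[lambda] - 1) = F^star - mu pi_0,
   i.e. R(lambda) >= mu pi_0. *)

From HB Require Import structures.
From mathcomp Require Import all_boot all_order all_algebra.
From mathcomp Require Import all_classical all_reals all_analysis.
From mathcomp Require Import measurable_realfun.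
From mathcomp Require Import ring lra.
From Stdlib Require Import Relations.

Import Order.TTheory GRing.Theory Num.Theory.
Import numFieldNormedType.Exports.
Local Open Scope classical_set_scope.
Local Open Scope ring_scope.

Set Implicit Arguments.
Unset Strict Implicit.
Unset Printing Implicit Defensive.

Section TwoPointMeasure.
Variables (d : measure_display) (T : measurableType d) (R : realType).

Lemma measure_setI1 (mu : {measure set T -> \bar R}) (A : set T) x :
  mu (A `&` [set x]) = (mu [set x] * \d_x A)%E.
Proof. by rewrite setI1 diracE; case: ifP; rewrite ?mule1 ?mule0 ?measure0. Qed.

Variables (a b : T) (s : R) (s0 : 0 <= s) (s1 : s <= 1).

Let s1_ge0 : 0 <= 1 - s. Proof. by rewrite subr_ge0. Qed.

Definition two_point : set T -> \bar R :=
  measure_add (mscale (NngNum s0) \d_a) (mscale (NngNum s1_ge0) \d_b).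

HB.instance Definition _ := Measure.on two_point.

Lemma two_pointE A : two_point A = (s%:E * \d_a A + (1 - s)%:E * \d_b A)%E.
Proof. by rewrite /two_point measure_addE. Qed.

Lemma two_point_eq1 (D : set T) : D a -> D b -> two_point D = 1%E.
Proof.
by move=> Da Db; rewrite two_pointE !diracE !mem_set// !mule1 -EFinD subrKC.
Qed.

HB.instance Definition _ :=
  @Measure_isProbability.Build _ _ R two_point (two_point_eq1 I I).

Lemma integral_two_point (D : set T) (f : T -> \bar R) :
  measurable D -> D a -> D b -> measurable_fun D f ->
  (forall x, D x -> 0 <= f x)%E ->
  (\int[two_point]_(x in D) f x = s%:E * f a + (1 - s)%:E * f b)%E.
Proof.
move=> mD Da Db mf f0.
rewrite ge0_integral_measure_add// !ge0_integral_mscale// !integral_dirac//=.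
by rewrite !diracE !mem_set// !mul1e.
Qed.

End TwoPointMeasure.

Section TwoAtoms.
Variables (d : measure_display) (T : measurableType d) (R : realType).
Variables (alpha : probability T R) (x1 x2 : T) (p : R).
Hypotheses (x12 : x1 != x2)
  (m1 : measurable [set x1]) (m2 : measurable [set x2])
  (alpha1 : alpha [set x1] = p%:E) (alpha2 : alpha [set x2] = (1 - p)%:E).

Let p_ge0 : 0 <= p.
Proof. by rewrite -lee_fin -alpha1 measure_ge0. Qed.

Let p_le1 : p <= 1.
Proof. by rewrite -subr_ge0 -lee_fin -alpha2 measure_ge0. Qed.

Lemma eq_two_point A : measurable A -> alpha A = two_point x1 x2 p_ge0 p_le1 A.
Proof.
move=> mA; set S := [set x1] `|` [set x2].
have mS : measurable S := measurableU _ _ m1 m2.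
have S_disj : [set x1] `&` [set x2] = set0.
  by apply/seteqP; split => y //= [-> /eqP]; rewrite (negbTE x12).
have alphaS : alpha S = 1%E.
  rewrite measureU//; change (alpha [set x1] + alpha [set x2] = 1)%E.
  by rewrite alpha1 alpha2 -EFinD subrKC.
have alphaAS0 : alpha (A `\` S) = 0%E.
  apply: (@subset_measure0 _ _ _ alpha _ (~` S)).
  - exact: measurableD.
  - exact: measurableC.
  - by move=> y [].
  - by move: (probability_setC alpha mS); rewrite alphaS subee.
have -> : alpha A = (alpha (A `\` S) + alpha (A `&` S))%E :=
  measureDI alpha mA mS.
have -> : alpha (A `&` S) = (alpha (A `&` [set x1]) + alpha (A `&` [set x2]))%E.
  rewrite setIUr measureU//; [exact: measurableI..|].
  by rewrite setIACA S_disj setI0.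
rewrite alphaAS0 add0e !(measure_setI1 alpha).
(* [alpha1], [alpha2] restated at the measure structure of [measure_setI1] *)
have a1 : (alpha : measure T R) [set x1] = p%:E := alpha1.
have a2 : (alpha : measure T R) [set x2] = (1 - p)%:E := alpha2.
by rewrite a1 a2 two_pointE.
Qed.

Lemma integral_two_atoms (D : set T) (f : T -> \bar R) :
  measurable D -> D x1 -> D x2 -> measurable_fun D f ->
  (forall x, D x -> 0 <= f x)%E ->
  (\int[alpha]_(x in D) f x = p%:E * f x1 + (1 - p)%:E * f x2)%E.
Proof.
move=> mD Dx1 Dx2 mf f0.
rewrite (eq_measure_integral (two_point x1 x2 p_ge0 p_le1)).
  exact: integral_two_point.
by move=> A mA _; exact: eq_two_point.
Qed.

End TwoAtoms.

Section BirthDeathChain.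
Variables (R : realType) (lam pi : nat -> R).

Lemma rate_up i : rate lam i i.+1 = lam i.
Proof. by rewrite /rate eqxx. Qed.

Lemma rate_down i : rate lam i.+1 i = 1.
Proof. by rewrite /rate ltn_eqF ?eqxx. Qed.

Lemma reachableE i : reachable lam i <-> (forall q, (q < i)%N -> 0 < lam q).
Proof.
split.
  move=> /clos_rt_rtn1_iff; elim=> [q //|j k jk _ IH q qk].
  move: jk; rewrite /step /rate; case: eqP => [kj lam_j|_].
    by move: qk; rewrite kj ltnS leq_eqVlt => /predU1P[->|/IH].
  case: eqP => [kj _|_]; last by rewrite ltxx.
  by apply: IH; rewrite kj (ltn_trans qk).
elim: i => [_|i IH lam_gt0]; first exact: rt_refl.
apply: (rt_trans _ _ _ i); first by apply: IH => q qi; apply/lam_gt0/ltnW.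
by apply: rt_step; rewrite /step rate_up; exact: lam_gt0.
Qed.

Lemma reachable_pred i : reachable lam i.+1 -> reachable lam i.
Proof. by rewrite !reachableE => lam_gt0 q qi; apply/lam_gt0/ltnW. Qed.

Hypothesis pi_stationary : stationary lam pi.

Lemma stationary_cut_balance i : pi i * lam i = pi i.+1.
Proof.
have [_ [pi_out [_ balance]]] := pi_stationary.
elim: i => [|i IH].
  have := balance 0%N (rt_refl _ _ _).
  by rewrite /= rate_down addr0 add0r mulr1.
have [reach_i1|unreach_i1] := pselect (reachable lam i.+1).
  have := balance _ reach_i1.
  rewrite /= rate_down rate_up IH mulr1 mulrDr mulr1.
  by move=> /(canRL (addrK _)); rewrite addrAC subrr add0r.
by rewrite !pi_out ?mul0r// => /reachable_pred.
Qed.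

Lemma cvg_series_stationary_rate :
  series (fun i => pi i * lam i) @ \oo --> 1 - pi 0%N.
Proof.
have [_ [_ [pi_sum1 _]]] := pi_stationary.
have -> : series (fun i => pi i * lam i) = (fun n => series pi n.+1 - pi 0%N).
  apply/funext; elim=> [|n IH].
    by rewrite /series /= !big_mkord big_ord0 big_ord_recl big_ord0 addr0 subrr.
  by rewrite seriesSr IH stationary_cut_balance [in RHS]seriesSr addrAC.
by apply: cvgB; [rewrite (cvg_shiftS (series pi)) | exact: cvg_cst].
Qed.

Lemma Epi_le_line (g : R -> R) (c m : R) :
  (forall i, 0 <= g (lam i) <= c + m * (lam i - 1)) ->
  Epi lam pi g <= c - m * pi 0%N.
Proof.
move=> g_bnd; have [pi_ge0 [_ [pi_sum1 _]]] := pi_stationary.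
set u := fun i => pi i * g (lam i).
set v := fun i => pi i * (c + m * (lam i - 1)).
have u_ge0 i : 0 <= u i by rewrite mulr_ge0// (andP (g_bnd i)).1.
have le_uv i : u i <= v i by rewrite ler_wpM2l// (andP (g_bnd i)).2.
have v_ge0 i : 0 <= v i := le_trans (u_ge0 i) (le_uv i).
have series_vE : series v =
    (fun n => (c - m) * series pi n + m * series (fun i => pi i * lam i) n).
  apply/funext; elim=> [|n IH].
    by rewrite /series /= !big_mkord !big_ord0; ring.
  by rewrite !seriesSr IH /v; ring.
have v_cvg : series v @ \oo --> c - m * pi 0%N.
  have -> : c - m * pi 0%N = (c - m) * 1 + m * (1 - pi 0%N) by ring.
  rewrite series_vE; apply: cvgD; apply: cvgMr => //.
  exact: cvg_series_stationary_rate.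
have u_cvg := series_le_cvg u_ge0 v_ge0 le_uv (cvgP _ v_cvg).
rewrite -(cvg_lim _ v_cvg)//.
exact: lim_series_le u_cvg (cvgP _ v_cvg) le_uv.
Qed.

End BirthDeathChain.

Section SupportLine.
Variables (R : realType) (I : set R) (F : R -> R) (Fs x1 x2 p : R).
Hypothesis mix_le : forall a b s, I a -> I b -> 0 <= s <= 1 ->
  s * a + (1 - s) * b <= 1 -> s * F a + (1 - s) * F b <= Fs.
Hypotheses (I_x1 : I x1) (I_x2 : I x2) (x2_lt1 : x2 < 1) (x1_gt1 : 1 < x1).
Hypotheses (p_ge0 : 0 <= p) (p_lt1 : p < 1).
Hypotheses (mean_le1 : p * x1 + (1 - p) * x2 <= 1)
  (FsE : Fs = p * F x1 + (1 - p) * F x2) (Fx2_lt : F x2 < Fs).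

Definition slope := (F x1 - F x2) / (x1 - x2).

Let x12_gt0 : 0 < x1 - x2. Proof. by rewrite subr_gt0 (lt_trans x2_lt1). Qed.

Let F12_gt0 : 0 < F x1 - F x2.
Proof.
rewrite ltNge; apply/negP => F12_le0.
by have := mulr_ge0_le0 p_ge0 F12_le0; move: Fx2_lt; rewrite FsE; lra.
Qed.

Let slopeM : slope * (x1 - x2) = F x1 - F x2.
Proof. by rewrite /slope divfK// gt_eqF. Qed.

Lemma slope_gt0 : 0 < slope.
Proof. exact: divr_gt0. Qed.

Lemma mean_eq1 : p * x1 + (1 - p) * x2 = 1.
Proof.
apply/eqP; rewrite eq_le mean_le1 /= leNgt; apply/negP => mean_lt1.
pose t : R := Num.min (1 - p) ((1 - (p * x1 + (1 - p) * x2)) / (x1 - x2)).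
have t_gt0 : 0 < t by rewrite lt_min subr_gt0 p_lt1 divr_gt0// subr_gt0.
have t_le : t <= 1 - p by rewrite ge_min lexx.
have t_mean : t * (x1 - x2) <= 1 - (p * x1 + (1 - p) * x2).
  by rewrite -ler_pdivlMr// ge_min lexx orbT.
have s01 : 0 <= p + t <= 1 by apply/andP; split; move: p_ge0; lra.
have mix_mean : (p + t) * x1 + (1 - (p + t)) * x2 <= 1.
  by move: t_mean; rewrite mulrBr; lra.
have := mix_le I_x1 I_x2 s01 mix_mean.
by have := mulr_gt0 t_gt0 F12_gt0; rewrite FsE; lra.
Qed.

Let ratio_in01 (u v : R) : 0 < u -> u <= v -> 0 < u / v <= 1.
Proof.
move=> u_gt0 le_uv; have v_gt0 := lt_le_trans u_gt0 le_uv.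
by rewrite divr_gt0// ler_pdivrMr// mul1r.
Qed.

Let line x := Fs + slope * (x - 1).

Let le_line_of_mix x y s : I x -> I y -> F y = line y -> 0 < s <= 1 ->
  s * (y - x) = y - 1 -> F x <= line x.
Proof.
move=> Ix Iy Fy /andP[s_gt0 s_le1] s_mean.
have := mix_le Ix Iy (s := s) ltac:(lra) ltac:(lra).
have mean_line : slope * (s * (x - 1) + (1 - s) * (y - 1)) = 0.
  have -> : s * (x - 1) + (1 - s) * (y - 1) = (y - 1) - s * (y - x) by ring.
  by rewrite s_mean subrr mulr0.
rewrite Fy /line => mix; rewrite -(ler_pM2l s_gt0); move: mix mean_line; lra.
Qed.

Lemma le_support_line x : I x -> F x <= Fs + slope * (x - 1).
Proof.
move=> Ix; have mean1 := mean_eq1.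
have line_x1 : F x1 = line x1.
  rewrite /line.
  have -> : x1 - 1 = (1 - p) * (x1 - x2) by rewrite -{1}mean1; ring.
  by rewrite mulrCA slopeM FsE; ring.
have line_x2 : F x2 = line x2.
  rewrite /line.
  have -> : x2 - 1 = - p * (x1 - x2) by rewrite -{1}mean1; ring.
  by rewrite mulrCA slopeM FsE; ring.
have [x_le1|x_gt1] := lerP x 1.
- have x1x_gt0 : 0 < x1 - x by move: x1_gt1; lra.
  apply: (le_line_of_mix (y := x1) (s := (x1 - 1) / (x1 - x))) => //.
    by apply: ratio_in01; rewrite ?subr_gt0// lerD2l lerN2.
  by rewrite divfK// gt_eqF.
- have xx2_gt0 : 0 < x - x2 by move: x2_lt1; lra.
  apply: (le_line_of_mix (y := x2) (s := (1 - x2) / (x - x2))) => //.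
    by apply: ratio_in01; rewrite ?subr_gt0// lerD2r ltW.
  by rewrite -(opprB x) mulrN divfK ?gt_eqF// opprB.
Qed.

End SupportLine.

Section StaticProblem.
Variables (R : realType) (lmax : R) (F : R -> R).
Hypotheses (mF : measurable_fun (I0 lmax) F)
  (F_ge0 : forall x, I0 lmax x -> 0 <= F x).

Let mI : measurable (I0 lmax). Proof. exact: measurable_itv. Qed.

Let mFE : measurable_fun (I0 lmax) (EFin \o F).
Proof. exact/measurable_EFinP. Qed.

Let mXE : measurable_fun (I0 lmax) EFin.
Proof. by apply/measurable_EFinP; exact: measurable_id. Qed.

Let I0_ge0 x : I0 lmax x -> 0 <= x.
Proof. by rewrite /I0 /= in_itv => /andP[]. Qed.

Lemma Fstar_ge_mix : 0 < Fstar lmax F -> forall a b s,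
  I0 lmax a -> I0 lmax b -> 0 <= s <= 1 -> s * a + (1 - s) * b <= 1 ->
  s * F a + (1 - s) * F b <= Fstar lmax F.
Proof.
move=> Fs_gt0 a b s Ia Ib /andP[s_ge0 s_le1] mean_le1.
apply: sup_upper_bound.
  (* [sup] of a set that is not bounded above is 0. *)
  by apply: contrapT => /sup_out Fs0; move: Fs_gt0; rewrite /Fstar Fs0 ltxx.
exists (two_point a b s_ge0 s_le1); split; first split.
- exact: two_point_eq1.
- by rewrite integral_two_point.
- by rewrite integral_two_point.
Qed.

Lemma optimal_two_atoms (alpha : probability R R) x1 x2 p :
  x1 != x2 -> I0 lmax x1 -> I0 lmax x2 ->
  alpha [set x1] = p%:E -> alpha [set x2] = (1 - p)%:E ->
  optimal lmax F alpha ->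
  p * x1 + (1 - p) * x2 <= 1 /\ Fstar lmax F = p * F x1 + (1 - p) * F x2.
Proof.
move=> x12 I_x1 I_x2 alpha1 alpha2 [[_ mean_le1] alpha_opt].
have alpha_int := integral_two_atoms x12 (measurable_set1 x1)
  (measurable_set1 x2) alpha1 alpha2 mI I_x1 I_x2.
split; first by move: mean_le1; rewrite alpha_int.
by apply: EFin_inj; rewrite -alpha_opt alpha_int.
Qed.

End StaticProblem.

Theorem lemmaB2 (R : realType) (lmax : R) (F : R -> R)
  (x1 x2 p eps : R) :
  1 < lmax ->
  (forall x, x \in `[0, lmax] -> derivable F x 1) ->
  {within `[0, lmax]%classic, continuous (derive1 F)} ->
  (forall x, x \in `[0, lmax] -> 0 <= F x) ->
  F 0 = 0 ->
  (forall x, x \in `[0, 1[ -> F x < Fstar lmax F) ->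
  0 < derive1 F 1 ->
  x1 \in `]1, lmax] -> x2 \in `[0, 1[ -> p \in `]0, 1[ ->
  (exists alpha : probability R R,
     alpha [set x1] = p%:E /\ alpha [set x2] = (1 - p)%:E /\
     optimal lmax F alpha) ->
  0 < eps ->
  forall (lam pi : nat -> R),
    policy lmax lam -> stable lam -> stationary lam pi ->
    regret lmax F lam pi <= eps ->
    series (fun i => pi i * lam i) @ \oo --> 1 - pi 0%N /\
    1 - (x1 - x2) / (F x1 - F x2) * eps <= 1 - pi 0%N.
Proof.
(* Continuity of F', F 0 = 0, F'(1) > 0, stability and eps > 0 are unused. *)
move=> lmax_gt1 F_der _ F_ge0 _ F_lt_Fs _ x1_in x2_in p_in
  [alpha [alpha1 [alpha2 alpha_opt]]] _ lam pi lam_policy _ pi_st regret_le.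
split; first exact: cvg_series_stationary_rate.
move: x1_in x2_in p_in; rewrite !in_itv /=.
move=> /andP[x1_gt1 x1_le] /andP[x2_ge0 x2_lt1] /andP[p_gt0 p_lt1].
have I_x1 : I0 lmax x1 by rewrite /I0 /= in_itv /= x1_le andbT; lra.
have I_x2 : I0 lmax x2 by rewrite /I0 /= in_itv /= x2_ge0; lra.
have mF : measurable_fun (I0 lmax) F.
  apply: subspace_continuous_measurable_fun; first exact: measurable_itv.
  exact: derivable_within_continuous.
have x12 : x1 != x2 by rewrite gt_eqF// (lt_trans x2_lt1).
have [mean_le1 FsE] :=
  optimal_two_atoms mF F_ge0 x12 I_x1 I_x2 alpha1 alpha2 alpha_opt.
have Fx2_lt : F x2 < Fstar lmax F by apply: F_lt_Fs; rewrite in_itv /= x2_ge0.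
have mix_le := Fstar_ge_mix mF F_ge0 (le_lt_trans (F_ge0 _ I_x2) Fx2_lt).
have slope_pos := slope_gt0 x2_lt1 x1_gt1 (ltW p_gt0) FsE Fx2_lt.
have below_line := le_support_line mix_le I_x1 I_x2 x2_lt1 x1_gt1
  (ltW p_gt0) p_lt1 mean_le1 FsE Fx2_lt.
have Epi_le : Epi lam pi F <= Fstar lmax F - slope F x1 x2 * pi 0%N.
  apply: (Epi_le_line pi_st) => i.
  have I_lam : I0 lmax (lam i) by exact: lam_policy.
  by rewrite F_ge0// below_line.
rewrite lerD2l lerN2 -invf_div ler_pdivlMl//.
by rewrite -/(slope F x1 x2); move: regret_le; rewrite /regret; lra.
Qed.
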